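(* Let $\Sigma$ be an alphabet, let $\tau \in \mathcal{T}(\Sigma)$, let $t, t' \in \mathcal{T}(\Sigma)$, and let $a_1 \neq a_2$ be two letters of $\Sigma$. If $\sigma_{a_i}^{\tau}(t) = \sigma_{a_i}^{\tau}(t')$ for $i = 1, 2$, then $t = t'$.
   Context: Let $\Sigma$ be an alphabet not containing $0,1$. A binary tree over $\Sigma$ is a finite set $t \subseteq \{0,1\}^*\Sigma$ such that for any $ua, vb \in t$ with $ua \neq vb$, $u$ is not a prefix of $v$ and $v$ is not a prefix of $u$; $\mathcal{T}(\Sigma)$ is the set of such trees, $\mathbf 0=\emptyset$, and each letter $a$ is identified with the tree $\{a\}$. The operation is $t\star t' = 0.t\cup 1.t'$. Every map $h\colon\Sigma\to\mathcal{T}(\Sigma)$ extends uniquely to an endomorphism of $\langle\mathcal{T}(\Sigma),\star\rangle$ (a map $h$ with $h(t\star t')=h(t)\star h(t')$; it satisfies $h(\mathbf 0)=\mathbf 0$). For $a\in\Sigma$ and $\tau\in\mathcal{T}(\Sigma)$, the grafting $\sigma_a^{\tau}$ is the endomorphism with $\sigma_a^\tau(a)=\tau$ and $\sigma_a^\tau(b)=b$ for $b\in\Sigma$, $b\neq a$. *)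

From HB Require Import structures.
From mathcomp Require Import all_boot.
From mathcomp Require Import finmap.
Set Implicit Arguments. Unset Strict Implicit. Unset Printing Implicit Defensive.
Local Open Scope fset_scope.

(* A word of {0,1}^* Sigma is represented as a pair (u, a) with u : seq bool
   (0 = false, 1 = true) and a : Sigma. *)
Definition word (Sigma : finType) := (seq bool * Sigma)%type.

(* A binary tree over Sigma: a finite set of words, prefix-free in the sense
   of the paper: for distinct ua, vb in t, u is not a prefix of v. *)
Definition is_tree (Sigma : finType) (t : {fset word Sigma}) : Prop :=
  forall x y, x \in t -> y \in t -> x <> y -> ~~ prefix x.1 y.1.

Definition tree0 (Sigma : finType) : {fset word Sigma} := fset0.
Definition letter (Sigma : finType) (a : Sigma) : {fset word Sigma} :=
  [fset ([::], a)].

Definition pre (Sigma : finType) (w : seq bool) (t : {fset word Sigma}) :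
  {fset word Sigma} := [fset (w ++ y.1, y.2) | y in t].
Definition star (Sigma : finType) (t t' : {fset word Sigma}) :=
  pre [:: false] t `|` pre [:: true] t'.

(* The unique endomorphism extending h : Sigma -> T(Sigma):
   h(t) = U_{ua in t} u.h(a). *)
Definition hom (Sigma : finType) (h : Sigma -> {fset word Sigma})
  (t : {fset word Sigma}) : {fset word Sigma} :=
  \bigcup_(x <- t) pre x.1 (h x.2).

Definition graft (Sigma : finType) (a : Sigma) (tau : {fset word Sigma}) :
  {fset word Sigma} -> {fset word Sigma} :=
  hom (fun b => if b == a then tau else letter b).

From mathcomp Require Import all_boot.
From mathcomp Require Import finmap.
Local Open Scope fset_scope.

(* A leaf x of t whose label is not a1 survives in sigma_a1(t) = sigma_a1(t'),
   so either x is a leaf of t' or x = y.z with y an a1-leaf of t' and z a leaf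
   of tau.  In the latter case y survives in sigma_a2(t') = sigma_a2(t): either
   y is a leaf of t, a prefix of the distinct leaf x, or y = w.z' with w an
   a2-leaf of t.  Then w is a prefix of x, hence w = x by prefix-freeness, so
   z and z' are leaves of tau at the root with distinct labels, contradicting
   prefix-freeness of tau.  Leaves labelled a1 are handled by exchanging a1
   and a2. *)

Section Grafting.

Variables (Sigma : finType) (a : Sigma) (tau : {fset word Sigma}).

Lemma mem_graft_id (t : {fset word Sigma}) x :
  x \in t -> x.2 != a -> x \in graft a tau t.
Proof.
move=> xt xa; apply/bigfcupP; exists x; first by rewrite xt.
rewrite (negbTE xa); apply/imfsetP; exists ([::], x.2); first exact: fset11.
by rewrite cats0; case: x {xt xa}.
Qed.

Lemma graftP (t : {fset word Sigma}) x :
  x \in graft a tau t ->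
  x \in t /\ x.2 != a \/
  exists y z, [/\ y \in t, y.2 = a, z \in tau & x = (y.1 ++ z.1, z.2)].
Proof.
case/bigfcupP => y /andP [yt _] /imfsetP [z /= zh ->].
case: eqP zh => [ya zt | /eqP ya /fset1P ->]; first by right; exists y, z.
by left; rewrite cats0; case: y yt ya.
Qed.

End Grafting.

Arguments mem_graft_id {Sigma a} tau {t x}.

Lemma tree_prefix_eq (Sigma : finType) (t : {fset word Sigma}) x y :
  is_tree t -> x \in t -> y \in t -> prefix x.1 y.1 -> x = y.
Proof.
move=> tree_t xt yt pxy; case: (x =P y) => // nxy.
by move/negP: (tree_t x y xt yt nxy).
Qed.

Arguments tree_prefix_eq {Sigma t x y}.

Lemma cat_eq_l (T : eqType) (s u : seq T) : s ++ u = s -> u = [::].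
Proof.
move/(congr1 size)/eqP; rewrite size_cat -[X in _ == X]addn0 eqn_add2l.
by rewrite size_eq0 => /eqP.
Qed.

Section TwoGraftings.

Variables (Sigma : finType) (tau t t' : {fset word Sigma}) (a1 a2 : Sigma).
Hypotheses (tree_tau : is_tree tau) (tree_t : is_tree t) (neq_a12 : a1 != a2).
Hypotheses (graft1_eq : graft a1 tau t = graft a1 tau t')
           (graft2_eq : graft a2 tau t = graft a2 tau t').

Lemma graft2_eq_mem x : x \in t -> x.2 != a1 -> x \in t'.
Proof.
move=> xt xa1; have := mem_graft_id tau xt xa1.
rewrite graft1_eq => /graftP [[] // | [y [z [yt' ya1 zt xe]]]].
have [xe1 xe2] : x.1 = y.1 ++ z.1 /\ x.2 = z.2 by rewrite xe.
have ya2 : y.2 != a2 by rewrite ya1.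
have := mem_graft_id tau yt' ya2; rewrite -graft2_eq.
case/graftP => [[yt _] | [w [z' [wt _ z't ye]]]].
  have eyx : y = x.
    by apply: tree_prefix_eq tree_t yt xt _; rewrite xe1 prefix_prefix.
  by move: xa1; rewrite -eyx ya1 eqxx.
have {}xe1 : x.1 = w.1 ++ (z'.1 ++ z.1) by rewrite xe1 ye catA.
have ewx : w = x.
  by apply: tree_prefix_eq tree_t wt xt _; rewrite xe1 prefix_prefix.
have : nilp (z'.1 ++ z.1) by apply/nilP/(@cat_eq_l _ w.1); rewrite -xe1 ewx.
rewrite cat_nilp => /andP [_ /nilP z0].
have ezz' : z = z'.
  by apply: tree_prefix_eq tree_tau zt z't _; rewrite z0 prefix0s.
by move: xa1; rewrite xe2 ezz' -ya1 ye eqxx.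
Qed.

End TwoGraftings.

Arguments graft2_eq_mem {Sigma tau t t' a1 a2} _ _ _ _ _ {x}.

Lemma graft2_eq_subset (Sigma : finType) (tau t t' : {fset word Sigma})
    (a1 a2 : Sigma) :
  is_tree tau -> is_tree t -> a1 != a2 ->
  graft a1 tau t = graft a1 tau t' -> graft a2 tau t = graft a2 tau t' ->
  {subset t <= t'}.
Proof.
move=> tree_tau tree_t neq_a12 E1 E2 [u b].
case: (eqVneq b a1) => [-> | ba1] ut.
  by apply: (graft2_eq_mem tree_tau tree_t _ E2 E1); rewrite // eq_sym.
exact: (graft2_eq_mem tree_tau tree_t neq_a12 E1 E2).
Qed.

Arguments graft2_eq_subset {Sigma tau t t' a1 a2}.

Theorem mainTheorem2 (Sigma : finType) (tau t t' : {fset word Sigma})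
  (a1 a2 : Sigma) :
  is_tree tau -> is_tree t -> is_tree t' -> a1 != a2 ->
  graft a1 tau t = graft a1 tau t' ->
  graft a2 tau t = graft a2 tau t' ->
  t = t'.
Proof.
move=> tree_tau tree_t tree_t' neq_a12 E1 E2.
apply/eqP; rewrite eqEfsubset; apply/andP; split; apply/fsubsetP.
  exact: (graft2_eq_subset tree_tau tree_t neq_a12 E1 E2).
exact: (graft2_eq_subset tree_tau tree_t' neq_a12 (esym E1) (esym E2)).
Qed.
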